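(* For any graph class $\mathcal{C}$ the following are equivalent: (i) $\mathcal{C}$ has bounded expansion; (ii) for every $r \in \mathbb{N}$ there exists $m\in\mathbb{N}$ such that every vertex of every graph in $\mathcal{C}$ has finite $(r,m)$-rank (i.e. $(r,m)$-rank not equal to $\infty$).
   Context: Bounded expansion is in the sense of Nešetřil and Ossona de Mendez. Graphs are finite and simple. $N_r^G(v)$ is the closed $r$-neighborhood of $v$ (vertices reachable from $v$ by a path with at most $r$ edges, including $v$); $G-S$ is the subgraph induced on $V(G)\setminus S$. The $(r,m)$-rank of vertices of $G$ (values in $\mathbb{N}\cup\{\infty\}$) is defined by the following procedure: initially every vertex has rank $\infty$; in rounds $i=1,2,3,\dots$, every vertex $v$ that currently has rank $\infty$ receives rank $i$ if there exists a set $S\subseteq V(G)\setminus\{v\}$ with $|S|\le m$ such that every vertex of $N_r^{G-S}(v)\setminus\{v\}$ received a finite rank in rounds $1,\dots,i-1$ (all vertices are checked simultaneously in a round); the procedure stops when all vertices have finite rank or a round assigns no new rank. Vertices still of rank $\infty$ keep rank $\infty$. *)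

From mathcomp Require Import all_boot.
Set Implicit Arguments. Unset Strict Implicit. Unset Printing Implicit Defensive.

Record graph := Graph {
  gn : nat;
  gadj : rel 'I_gn;
  gsym : symmetric gadj;
  girr : irreflexive gadj }.

Definition gV (G : graph) := 'I_(gn G).

Definition nedges (G : graph) : nat :=
  #|[set p : gV G * gV G | (p.1 < p.2)%N && gadj p.1 p.2]|.

(* ball e A v k: vertices reachable from v by a path with at most k edges
   all of whose vertices lie in A (v itself is included iff v \in A).
   With A = ~: S and v \notin S this is N_k^{G-S}(v). *)
Fixpoint ball (T : finType) (e : rel T) (A : {set T}) (v : T) (k : nat)
  : {set T} :=
  match k with
  | 0 => A :&: [set v]
  | k'.+1 => ball e A v k' :|:
             [set y in A | [exists x in ball e A v k', e x y]]
  end.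

Definition shallow_minor (r : nat) (H G : graph) : Prop :=
  exists B : gV H -> {set gV G},
    (forall u w : gV H, u != w -> [disjoint B u & B w]) /\
    (forall u : gV H, exists2 c, c \in B u & B u \subset ball (gadj (g:=G)) (B u) c r) /\
    (forall u w : gV H, gadj u w ->
        exists x y, [/\ x \in B u, y \in B w & gadj x y]).

Definition bounded_expansion (C : graph -> Prop) : Prop :=
  exists f : nat -> nat, forall G, C G -> forall (r : nat) (H : graph),
    shallow_minor r H G -> (nedges H <= f r * gn H)%N.

(* ranked G r m i: the set of vertices that received a finite rank in
   rounds 1..i of the (r,m)-rank procedure. *)
Fixpoint ranked (G : graph) (r m : nat) (i : nat) : {set gV G} :=
  match i with
  | 0 => set0
  | i'.+1 => ranked G r m i' :|:
      [set v | [exists S : {set gV G},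
         [&& v \notin S, (#|S| <= m)%N &
             (ball (gadj (g:=G)) (~: S) v r :\ v) \subset ranked G r m i']]]
  end.

Definition finite_rank (G : graph) (r m : nat) (v : gV G) : Prop :=
  exists i, v \in ranked G r m i.
Arguments finite_rank : clear implicits.
Arguments ranked : clear implicits.

(* (ii) => (i): order the vertices by decreasing (4t+1, m)-rank.  A vertex v
   has a set S of at most m vertices such that outside S every vertex within
   distance 4t+1 of v has smaller rank, so a path from v along which all
   vertices stay above its endpoint must cross S.  By induction on k, v
   therefore weakly k-reaches at most (m+1)^k vertices.  In a t-shallow minor,
   the minimal vertices of two adjacent branch sets are joined by a path of
   length 4t+1 inside the two branch sets, so the smaller one is weakly
   reachable from the larger one; this bounds the edge density by (m+1)^(4t+1).

   (i) => (ii): if some round ranks no new vertex, no r*K vertices separate an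
   unranked vertex v from the other unranked vertices within distance r, so by
   augmenting paths v is the centre of a fan of K paths of length at most r
   ending at unranked vertices, disjoint apart from v, with interiors avoiding
   the unranked vertices.  Bounded expansion excludes this, by induction on r
   for sets U in which a fixed fraction of the vertices are fan centres, in
   graphs whose shallow minors inside a vertex set W are sparse.  Take a
   maximum packing of U-U paths of length at most r+1 with disjoint interiors.
   The packing is a shallow minor on U, so most centres have few packing
   neighbours; by maximality every other fan path meets a packed interior, and
   contracting each interior to a vertex shortens it by one.  The contracted
   graph still has sparse shallow minors, which closes the induction. *)

From mathcomp Require Import all_boot zify.
From Stdlib Require Import Classical ClassicalEpsilon.
Set Implicit Arguments. Unset Strict Implicit. Unset Printing Implicit Defensive.

Section Balls.
Variables (T : finType) (e : rel T).
Implicit Types (A : {set T}) (v x y z : T).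

Lemma ball_sub A v k : ball e A v k \subset A.
Proof.
elim: k => [|k IH] /=; first exact: subsetIl.
by apply/subsetP => x; rewrite !inE => /orP[/(subsetP IH)|/andP[]].
Qed.

Lemma ball_mono A A' v k k' : A \subset A' -> k <= k' ->
  ball e A v k \subset ball e A' v k'.
Proof.
move=> sAA' /subnKC <-; elim: (k' - k) => [|j IH]; last first.
  by rewrite addnS /=; apply: subset_trans IH (subsetUl _ _).
rewrite addn0; elim: k => [|k IH] /=; first exact: setSI.
apply/subsetP => x; rewrite !inE => /orP[/(subsetP IH)->//|].
case/andP=> xA /existsP[y /andP[yb eyx]]; rewrite (subsetP sAA') //=.
by apply/orP; right; apply/existsP; exists y; rewrite (subsetP IH).
Qed.

Lemma ball_le A v k k' x : k <= k' -> x \in ball e A v k -> x \in ball e A v k'.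
Proof. by move=> le; apply/subsetP/ball_mono. Qed.

Lemma ball_step A v k x y : x \in ball e A v k -> y \in A -> e x y ->
  y \in ball e A v k.+1.
Proof.
move=> xb yA exy /=; rewrite !inE yA /=; apply/orP; right.
by apply/existsP; exists x; rewrite xb.
Qed.

Lemma mem_ball_center A v k : v \in A -> v \in ball e A v k.
Proof. by move=> vA; apply: (ball_le (leq0n k)); rewrite /= !inE vA eqxx. Qed.

Lemma ball_trans A v k y l z : y \in ball e A v k -> z \in ball e A y l ->
  z \in ball e A v (k + l).
Proof.
move=> yb; elim: l z => [|l IH] z /=; first by rewrite !inE addn0 => /andP[_ /eqP ->].
rewrite addnS !inE => /orP[/IH ->//|/andP[zA /existsP[x /andP[/IH xb exz]]]].
by apply/orP; right; rewrite zA; apply/existsP; exists x; rewrite xb.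
Qed.

Lemma ball_path A v k u : u \in ball e A v k -> u != v ->
  exists s, [/\ path e v s, last v s = u, size s <= k, all (mem A) s & v \notin s].
Proof.
elim: k u => [|k IH] u /=; first by rewrite !inE => /andP[_ ->].
rewrite !inE => /orP[ub uv|/andP[uA /existsP[x /andP[xb exu]]] uv].
  by have [s [? ? ? ? ?]] := IH _ ub uv; exists s; split => //; apply: leqW.
have [xv|xv] := eqVneq x v.
  by exists [:: u]; subst x; rewrite /= exu uA inE eq_sym uv.
have [s [ps ls ss aS vs]] := IH _ xb xv.
exists (rcons s u); split.
- by rewrite rcons_path ps ls.
- exact: last_rcons.
- by rewrite size_rcons.
- by rewrite all_rcons aS andbT.
- by rewrite mem_rcons inE negb_or eq_sym uv.
Qed.

Lemma path_ball A v s : path e v s -> v \in A -> all (mem A) s ->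
  {subset v :: s <= ball e A v (size s)}.
Proof.
move=> + vA; elim/last_ind: s => [|s y IH].
  by move=> _ _ x; rewrite inE => /eqP->; apply: mem_ball_center.
rewrite rcons_path all_rcons size_rcons => /andP[ps ey] /andP[yA aA] x.
rewrite -rcons_cons mem_rcons inE => /orP[/eqP->|xs]; last exact/(ball_le (leqnSn _))/IH.
by apply: (ball_step (x := last v s)) => //; apply: IH => //; apply: mem_last.
Qed.

Lemma ball_through A (S : {set T}) v k u : v \notin S ->
  u \in ball e A v k -> u \notin ball e (A :&: ~: S) v k ->
  exists s j, [/\ s \in S, s \in A, j < k & u \in ball e A s j].
Proof.
move=> vS; elim: k u => [|k IH] u.
  by rewrite /= !inE => /andP[uA /eqP uv]; subst u; rewrite uA vS eqxx.
move=> /setUP[ub nub|].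
  have /(IH _ ub)[s [j [? ? ? ?]]] : u \notin ball e (A :&: ~: S) v k.
    exact: contra (ball_le (leqnSn k)) nub.
  by exists s, j; split => //; apply: ltnW.
rewrite inE => /andP[uA /existsP[x /andP[xb exu]]] nub.
case xb' : (x \in ball e (A :&: ~: S) v k).
  case uS : (u \in S); first by exists u, 0; split => //; apply: mem_ball_center.
  by move: nub; rewrite (ball_step xb') // !inE uA uS.
have [s [j [? ? ? sb]]] := IH _ xb (negbT xb').
by exists s, j.+1; split => //; apply: ball_step sb uA exu.
Qed.

Hypothesis e_sym : symmetric e.

Lemma ball_sym A v k y : y \in ball e A v k -> v \in ball e A y k.
Proof.
elim: k y => [|k IH] y /=; first by rewrite !inE => /andP[yA /eqP yv]; subst y; rewrite yA eqxx.
case/setUP=> [/IH/(ball_le (leqnSn k))//|].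
rewrite inE => /andP[yA /existsP[x /andP[xb exy]]].
have yx1 : x \in ball e A y 1.
  apply: (@ball_step _ _ 0 y); last by rewrite e_sym.
    exact: mem_ball_center.
  exact: subsetP (ball_sub A v k) x xb.
by have := ball_trans yx1 (IH _ xb); rewrite add1n.
Qed.

End Balls.

Lemma card_bigcup_le (I T : finType) (A : {set I}) (F : I -> {set T}) :
  #|\bigcup_(i in A) F i| <= \sum_(i in A) #|F i|.
Proof.
elim/big_ind2: _ => [|X1 n1 X2 n2 h1 h2|//]; first by rewrite cards0.
by apply: leq_trans (leq_card_setU _ _) _; apply: leq_add.
Qed.

Section WeakReachability.
Variables (G : graph) (key : gV G -> nat).
Local Notation adj := (@gadj G).

Definition wreach k (v : gV G) : {set gV G} :=
  [set u | (key u <= key v) && (u \in ball adj [set y | key u <= key y] v k)].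

(* The path a -> centre -> x -- y -> centre -> b has 2t + 1 + 2t edges. *)
Lemma wreach_linked_branch_sets t (Ba Bb : {set gV G}) a b x y :
  (exists2 c, c \in Ba & Ba \subset ball adj Ba c t) ->
  (exists2 c, c \in Bb & Bb \subset ball adj Bb c t) ->
  a \in Ba -> {in Ba, forall z, key a <= key z} ->
  b \in Bb -> {in Bb, forall z, key b <= key z} ->
  key b < key a -> x \in Ba -> y \in Bb -> adj x y ->
  b \in wreach (4 * t + 1) a.
Proof.
move=> [ca _ Bar] [cb _ Bbr] aB amin bB bmin ltba xB yB xy.
rewrite inE (ltnW ltba) /=; set A := [set z | key b <= key z].
have BaA : Ba \subset A.
  by apply/subsetP => z zB; rewrite inE (leq_trans (ltnW ltba)) ?amin.
have BbA : Bb \subset A by apply/subsetP => z zB; rewrite inE bmin.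
have ca_a : ca \in ball adj Ba a t := ball_sym (@gsym G) (subsetP Bar _ aB).
have x_a : x \in ball adj Ba a (t + t) by apply: ball_trans ca_a _; apply: (subsetP Bar).
have y_a : y \in ball adj A a (t + t).+1.
  by apply: ball_step (subsetP BbA _ yB) xy; apply: (subsetP (ball_mono _ _ BaA (leqnn _))).
have cb_y : cb \in ball adj Bb y t := ball_sym (@gsym G) (subsetP Bbr _ yB).
have b_y : b \in ball adj A y (t + t).
  apply: (subsetP (ball_mono _ _ BbA (leqnn _))).
  by apply: ball_trans cb_y _; apply: (subsetP Bbr).
have -> : 4 * t + 1 = (t + t).+1 + (t + t) by clear -t; lia.
exact: ball_trans y_a b_y.
Qed.

Lemma card_wreach_pairs (I : finType) (g : I -> gV G) k c :
  (forall v, #|wreach k v| <= c) ->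
  #|[set q : I * gV G | q.2 \in wreach k (g q.1)]| <= c * #|I|.
Proof.
move=> hc.
have -> : [set q : I * gV G | q.2 \in wreach k (g q.1)] =
          \bigcup_(i in [set: I]) [set (i, z) | z in wreach k (g i)].
  apply/setP => -[i z]; rewrite inE /=; apply/idP/bigcupP => [zW|[j _]].
    by exists i; rewrite ?inE ?imset_f.
  by case/imsetP=> z' z'W [-> ->].
apply: leq_trans (card_bigcup_le _ _) _; rewrite -cardsT mulnC -sum_nat_const.
by apply: leq_sum => i _; rewrite card_imset //; move=> z1 z2 [].
Qed.

Hypothesis key_inj : injective key.

Lemma shallow_minor_density t (H : graph) c :
  (forall v, #|wreach (4 * t + 1) v| <= c) -> shallow_minor t H G ->
  nedges H <= c * gn H.
Proof.
move=> hc [B [Bdis [Bcen Bedge]]].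
have /fin_all_exists[mu hmu] u :
    exists x, x \in B u /\ {in B u, forall z, key x <= key z}.
  by have [c0 c0B _] := Bcen u; case: (arg_minnP key c0B) => x xB xmin; exists x.
have mu_inj : injective mu.
  move=> u w muw; apply/eqP; apply: contraT => uw.
  have := Bdis _ _ uw; rewrite disjoint_subset => /subsetP/(_ (mu u)).
  by rewrite (hmu u).1 inE muw (hmu w).1 => /(_ isT).
have key_mu_neq u w : u != w -> key (mu u) != key (mu w).
  by apply: contra => /eqP/key_inj/mu_inj ->.
have edge_wreach a b : gadj a b -> key (mu b) < key (mu a) ->
    mu b \in wreach (4 * t + 1) (mu a).
  move=> ab lt; have [x [y [xB yB xy]]] := Bedge _ _ ab.
  exact: wreach_linked_branch_sets (Bcen a) (Bcen b) (hmu a).1 (hmu a).2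
           (hmu b).1 (hmu b).2 lt xB yB xy.
(* Charge each edge to the endpoint whose branch set has the larger minimum. *)
pose phi (p : gV H * gV H) : gV H * gV G :=
  if key (mu p.2) < key (mu p.1) then (p.1, mu p.2) else (p.2, mu p.1).
have := card_wreach_pairs mu hc; rewrite card_ord => /(leq_trans _); apply; rewrite /nedges.
set E := [set p | _]; set Y := [set q | _].
have phiY p : p \in E -> phi p \in Y.
  case: p => u w; rewrite inE /= => /andP[uw adj_uw].
  have neq : u != w by rewrite neq_ltn uw.
  rewrite /phi /= inE; case: ltnP => [lt|]; first exact: edge_wreach.
  rewrite leq_eqVlt (negbTE (key_mu_neq _ _ neq)) /= => lt.
  by apply: edge_wreach; rewrite // (@gsym H).
have phi_inj : {in E &, injective phi}.
  have phi_shape p : exists a b, phi p = (a, mu b) /\ (p = (a, b) \/ p = (b, a)).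
    case: p => u w; rewrite /phi /=; case: ifP => _; first by exists u, w; split; [|left].
    by exists w, u; split; [|right].
  move=> p q; have [a [b [-> hp]]] := phi_shape p; have [a' [b' [-> hq]]] := phi_shape q.
  move=> + + [ea /mu_inj eb]; subst a' b'; rewrite !inE.
  by case: hp => ->; case: hq => -> //= /andP[l1 _] /andP[l2 _];
     move: (ltn_trans l1 l2); rewrite ltnn.
rewrite -(card_in_imset phi_inj); apply: subset_leq_card.
by apply/subsetP => _ /imsetP[p pE ->]; apply: phiY.
Qed.

End WeakReachability.

Lemma ranked_mono G r m i j : i <= j -> ranked G r m i \subset ranked G r m j.
Proof.
move=> /subnKC <-; elim: (j - i) => [|k IH]; first by rewrite addn0.
by rewrite addnS; apply: subset_trans IH (subsetUl _ _).
Qed.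

Section Rank.
Variables (G : graph) (r m : nat).
Hypothesis rank_fin : forall v, finite_rank G r m v.
Local Notation adj := (@gadj G).

Definition rank (v : gV G) : nat := ex_minn (rank_fin v).

Lemma rank_ranked v : v \in ranked G r m (rank v).
Proof. by rewrite /rank; case: ex_minnP. Qed.

Lemma rank_min v i : v \in ranked G r m i -> rank v <= i.
Proof. by rewrite /rank; case: ex_minnP => j _; apply. Qed.

Lemma rank_separator v : exists S : {set gV G}, [/\ v \notin S, #|S| <= m &
  forall u, u \in ball adj (~: S) v r -> u != v -> rank u < rank v].
Proof.
have := rank_ranked v; case E : (rank v) => [|i]; first by rewrite inE.
case/setUP=> [/rank_min|]; first by rewrite E ltnn.
rewrite inE => /existsP[S /and3P[vS cS sub]]; exists S; split => // u ub uv.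
by apply: rank_min; apply: (subsetP sub); rewrite !inE uv.
Qed.

(* Decreasing rank, ties broken by index. *)
Definition rank_key (v : gV G) : nat := (\max_(w : gV G) rank w - rank v) * gn G + v.

Lemma rank_key_inj : injective rank_key.
Proof.
move=> u v /(congr1 (modn^~ (gn G))); rewrite !modnMDl !modn_small //.
exact: val_inj.
Qed.

Lemma rank_key_anti u v : rank_key u < rank_key v -> rank v <= rank u.
Proof.
rewrite /rank_key; set M := \max_(w : gV G) rank w.
have rkM w : rank w <= M by apply: (@leq_bigmax (gV G) (fun w => rank w) w).
apply: contraLR; rewrite -!ltnNge => ltuv.
have lt : M - rank v < M - rank u by have := rkM v; have := rkM u; lia.
rewrite ltnS; apply: (@leq_trans ((M - rank u) * gn G)); last exact: leq_addr.
apply: leq_trans (leq_mul lt (leqnn (gn G))).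
by rewrite mulSn addnC leq_add2r ltnW.
Qed.

Lemma card_wreach_rank k v : k <= r -> #|wreach rank_key k v| <= m.+1 ^ k.
Proof.
elim: k v => [|k IH] v kr.
  rewrite expn0 -(cards1 v); apply: subset_leq_card; apply/subsetP => u.
  by rewrite !inE => /andP[_ /andP[_ ->]].
have [S [vS cS hS]] := rank_separator v.
have sub : wreach rank_key k.+1 v \subset v |: \bigcup_(s in S) wreach rank_key k s.
  apply/subsetP => u; rewrite inE => /andP[kuv ub]; rewrite !inE.
  have [//|uv] := eqVneq u v; rewrite /=.
  have kuv' : rank_key u < rank_key v.
    by rewrite ltn_neqAle kuv andbT; apply: contra uv => /eqP/rank_key_inj ->.
  have nub : u \notin ball adj ([set y | rank_key u <= rank_key y] :&: ~: S) v k.+1.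
    apply: contraL (rank_key_anti kuv') => /(subsetP (ball_mono adj v (subsetIr _ _) kr)).
    by move=> /hS/(_ uv); rewrite -ltnNge.
  have [s [j [sS sA jk ub']]] := ball_through vS ub nub.
  apply/bigcupP; exists s; rewrite // inE (ball_le _ ub') ?andbT //.
  by move: sA; rewrite inE.
apply: leq_trans (subset_leq_card sub) _.
apply: leq_trans (leq_card_setU _ _) _; rewrite cards1 expnS mulSn.
apply: leq_add; first by rewrite expn_gt0.
apply: leq_trans (card_bigcup_le _ _) _.
apply: (@leq_trans (\sum_(s in S) m.+1 ^ k)); first by apply: leq_sum => s _; apply/IH/ltnW.
by rewrite sum_nat_const leq_mul2r cS orbT.
Qed.

End Rank.

Lemma finite_rank_bounded_expansion (C : graph -> Prop) :
  (forall r, exists m, forall G, C G -> forall v : gV G, finite_rank G r m v) ->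
  bounded_expansion C.
Proof.
case/choice=> m hm; exists (fun t => (m (4 * t + 1)).+1 ^ (4 * t + 1)) => G CG t H.
apply: (shallow_minor_density (@rank_key_inj _ _ _ (hm (4 * t + 1) G CG))) => v.
exact: card_wreach_rank.
Qed.

Section ShallowMinorModels.
Variable T : finType.
Implicit Types (e : rel T) (X Y W : {set T}).

Definition linked e X Y := [exists x in X, exists y in Y, e x y].

Lemma linkedP e X Y :
  reflect (exists x y, [/\ x \in X, y \in Y & e x y]) (linked e X Y).
Proof.
apply: (iffP existsP) => [[x /andP[xX /existsP[y /andP[yY exy]]]]|[x [y [xX yY exy]]]].
  by exists x, y.
by exists x; rewrite xX; apply/existsP; exists y; rewrite yY.
Qed.

Lemma linked_sym e X Y : symmetric e -> linked e X Y -> linked e Y X.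
Proof.
by move=> e_sym /linkedP[x [y [xX yY exy]]]; apply/linkedP; exists y, x; rewrite e_sym.
Qed.

(* Branch sets are indexed by their centres. *)
Definition minor_model e t (B : T -> {set T}) (J : {set T}) : Prop :=
  (forall u, u \in J -> u \in B u /\ B u \subset ball e (B u) u t) /\
  (forall u w, u \in J -> w \in J -> u != w -> [disjoint B u & B w]).

Definition model_pairs e (B : T -> {set T}) (J : {set T}) : {set T * T} :=
  [set p | [&& p.1 \in J, p.2 \in J, p.1 != p.2 & linked e (B p.1) (B p.2)]].

(* [model_pairs] are ordered pairs, hence the factor 2 relative to edges. *)
Definition sparse_minors (f : nat -> nat) e W : Prop :=
  forall t (B : T -> {set T}) (J : {set T}),
    (forall u, u \in J -> B u \subset W) -> minor_model e t B J ->
    #|model_pairs e B J| <= 2 * f t * #|J|.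

End ShallowMinorModels.

Lemma card_adj_pairs (H : graph) :
  #|[set p : gV H * gV H | gadj p.1 p.2]| = 2 * nedges H.
Proof.
set E := [set p : gV H * gV H | (p.1 < p.2)%N && gadj p.1 p.2].
pose sw (p : gV H * gV H) := (p.2, p.1).
have sw_inj : injective sw by move=> [a b] [c d] [-> ->].
have -> : [set p : gV H * gV H | gadj p.1 p.2] = E :|: sw @: E.
  apply/setP => -[a b]; rewrite !inE /=; apply/idP/idP.
    move=> ab; case: (ltngtP a b) => [lt|gt|eq]; first by rewrite ab.
      by apply/orP; right; apply/imsetP; exists (b, a); rewrite // inE /= gt (@gsym H).
    by move: ab; rewrite (val_inj eq) (@girr H).
  case/orP=> [/andP[_ ->]//|/imsetP[[c d]]]; rewrite inE /= => /andP[_ cd] [-> ->].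
  by rewrite (@gsym H).
have disj : E :&: sw @: E = set0.
  apply/setP => -[a b]; rewrite !inE /=; apply/negP.
  case/andP=> /andP[ab _] /imsetP[[c d]]; rewrite inE /= => /andP[cd _] [e1 e2].
  by subst; move: (ltn_trans ab cd); rewrite ltnn.
by rewrite cardsU disj cards0 subn0 card_imset // addnn -mul2n.
Qed.

Lemma sparse_minors_graph (f : nat -> nat) (G : graph) :
  (forall t H, shallow_minor t H G -> nedges H <= f t * gn H) ->
  sparse_minors f (@gadj G) setT.
Proof.
move=> hG t B J _ [Bcen Bdisj].
pose adj (i j : 'I_#|J|) :=
  (i != j) && linked (@gadj G) (B (enum_val i)) (B (enum_val j)).
have adj_sym : symmetric adj.
  by move=> i j; rewrite /adj eq_sym; apply/idP/idP => /andP[-> /(linked_sym (@gsym G))].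
have adj_irr : irreflexive adj by move=> i; rewrite /adj eqxx.
pose H := Graph adj_sym adj_irr.
have HG : shallow_minor t H G.
  exists (fun i => B (enum_val i)); split; last split.
  - move=> i j ij; apply: Bdisj; rewrite ?enum_valP //.
    by apply: contra ij => /eqP/enum_val_inj ->.
  - by move=> i; exists (enum_val i); have [] := Bcen _ (enum_valP i).
  - by move=> i j /andP[_ /linkedP[x [y [? ? ?]]]]; exists x, y.
have card_H : #|[set p : gV H * gV H | gadj p.1 p.2]| <= 2 * f t * #|J|.
  by rewrite card_adj_pairs -mulnA leq_pmul2l //; apply: hG.
apply: leq_trans card_H.
pose g (p : 'I_#|J| * 'I_#|J|) := (enum_val p.1, enum_val p.2).
have g_inj : injective g by move=> [a b] [c d] [/enum_val_inj -> /enum_val_inj ->].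
rewrite -(card_imset _ g_inj); apply: subset_leq_card; apply/subsetP => -[u w].
rewrite inE /= => /and4P[uJ wJ uw l]; apply/imsetP.
exists (enum_rank_in uJ u, enum_rank_in uJ w); last by rewrite /g /= !enum_rankK_in.
rewrite inE /= /adj !enum_rankK_in // l andbT.
by apply: contra uw => /eqP/(congr1 enum_val); rewrite !enum_rankK_in // => ->.
Qed.

Section Contraction.
Variables (T : finType) (e : rel T) (W W' : {set T}) (bag : T -> {set T}) (b : nat).
Hypothesis e_sym : symmetric e.
Hypothesis bag_model : forall x, x \in W' ->
  [/\ x \in bag x, bag x \subset ball e (bag x) x b & bag x \subset W].
Hypothesis bag_disj : forall x y, x \in W' -> y \in W' -> x != y ->
  [disjoint bag x & bag y].

Definition contract_rel x y := (x != y) && linked e (bag x) (bag y).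

Lemma contract_rel_sym : symmetric contract_rel.
Proof.
by move=> x y; rewrite /contract_rel eq_sym; apply/idP/idP => /andP[-> /(linked_sym e_sym)].
Qed.

Lemma contract_rel_irr : irreflexive contract_rel.
Proof. by move=> x; rewrite /contract_rel eqxx. Qed.

(* A contracted edge expands to a walk of at most [2 * b + 1] edges through a bag. *)
Lemma ball_contract (X : {set T}) u k x : X \subset W' -> u \in X ->
  x \in ball contract_rel X u k ->
  bag x \subset ball e (\bigcup_(y in X) bag y) u (k * (2 * b + 1) + b).
Proof.
move=> XW' uX; elim: k x => [|k IH] x.
  rewrite /= !inE => /andP[_ /eqP ->]; rewrite mul0n add0n.
  have [_ bag_ball _] := bag_model (subsetP XW' u uX).
  by apply: subset_trans bag_ball (ball_mono e u (bigcup_sup _ uX) (leqnn _)).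
case/setUP=> [xb|].
  apply: subset_trans (IH _ xb) (ball_mono e u (subxx _) _).
  by rewrite leq_add2r leq_mul2r leqnSn orbT.
rewrite inE => /andP[xX /existsP[y /andP[yb /andP[_ /linkedP[y0 [x0 [y0y x0x ey]]]]]]].
have [_ bag_ball _] := bag_model (subsetP XW' x xX).
have x0u : x0 \in ball e (\bigcup_(y in X) bag y) u (k * (2 * b + 1) + b).+1.
  by apply: ball_step (subsetP (IH _ yb) _ y0y) _ ey; apply/bigcupP; exists x.
have xx0 : x \in ball e (bag x) x0 b := ball_sym e_sym (subsetP bag_ball _ x0x).
have -> : k.+1 * (2 * b + 1) + b = (k * (2 * b + 1) + b).+1 + (b + b).
  by rewrite mulSn; clear -k; lia.
apply/subsetP => z zx; apply: ball_trans x0u _.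
apply: (subsetP (ball_mono e x0 (bigcup_sup _ xX) (leqnn _))).
exact: ball_trans xx0 (subsetP bag_ball _ zx).
Qed.

Lemma sparse_minors_contract f : sparse_minors f e W ->
  sparse_minors (fun t => f (t * (2 * b + 1) + b)) contract_rel W'.
Proof.
move=> hW t B J BW' [Bcen Bdisj].
pose B2 u := \bigcup_(x in B u) bag x.
have B2W u : u \in J -> B2 u \subset W.
  move=> uJ; apply/bigcupsP => x xB.
  by have [_ _] := bag_model (subsetP (BW' _ uJ) x xB).
have B2model : minor_model e (t * (2 * b + 1) + b) B2 J.
  split=> [u uJ|u w uJ wJ uw].
    have [uB Bball] := Bcen _ uJ; split.
      by apply/bigcupP; exists u; have [] := bag_model (subsetP (BW' _ uJ) u uB).
    apply/bigcupsP => x xB; apply: ball_contract (subsetP Bball _ xB) => //.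
    exact: BW'.
  rewrite -setI_eq0; apply/eqP/setP => z; rewrite !inE; apply/negP.
  case/andP=> /bigcupP[x xB zx] /bigcupP[y yB zy].
  have xy : x != y.
    by apply: contraTneq yB => <-; rewrite (disjointFr (Bdisj _ _ uJ wJ uw) xB).
  have := bag_disj (subsetP (BW' _ uJ) x xB) (subsetP (BW' _ wJ) y yB) xy.
  by move=> /disjointFr/(_ zx); rewrite zy.
apply: leq_trans (hW _ B2 J B2W B2model).
apply: subset_leq_card; apply/subsetP => -[u w]; rewrite !inE /=.
case/and4P=> -> -> -> /linkedP[x [y [xB yB /andP[_ /linkedP[x0 [y0 [? ? ?]]]]]]].
by apply/linkedP; exists x0, y0; split => //; apply/bigcupP; [exists x | exists y].
Qed.

End Contraction.

Lemma exists_max (A : Type) (Q : A -> Prop) (g : A -> nat) (N : nat) :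
  (exists a, Q a) -> (forall a, Q a -> g a <= N) ->
  exists a, Q a /\ forall b, Q b -> g b <= g a.
Proof.
move=> [a0 Qa0] bnd; apply: NNPP => nomax.
suff /(_ N.+1)[a [/bnd]] : forall k, exists a, Q a /\ k <= g a.
  by move=> le_aN; rewrite ltnNge le_aN.
elim=> [|k [a [Qa le_ka]]]; first by exists a0.
have [b hb] := not_all_ex_not _ _ (fun h => nomax (ex_intro _ a (conj Qa h))).
have [Qb nle] := imply_to_and _ _ hb; have lt_ab : g a < g b by rewrite ltnNge; apply/negP.
by exists b; split=> //; apply: leq_ltn_trans lt_ab.
Qed.

Section PathInterior.
Variable T : eqType.
Implicit Types (e : rel T) (s : seq T).

(* A path [s] from [v] visits [v :: s]; its interior omits [v] and [last v s]. *)
Definition interior s := take (size s).-1 s.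

Lemma mem_interior s x : x \in interior s -> x \in s.
Proof. exact: mem_take. Qed.

Lemma size_interior s : size (interior s) = (size s).-1.
Proof. by rewrite /interior size_takel // leq_pred. Qed.

Lemma interior_rcons s y : interior (rcons s y) = s.
Proof. by rewrite /interior size_rcons /= -cats1 take_size_cat. Qed.

Lemma path_interior e a s : path e a s -> path e a (interior s).
Proof. exact: take_path. Qed.

Lemma last_interior_edge e a s : path e a s -> s != [::] ->
  e (last a (interior s)) (last a s).
Proof. by case/lastP: s => // s y; rewrite interior_rcons last_rcons rcons_path => /andP[]. Qed.

Lemma interior_head s x a t : interior s = a :: t -> head x s = a.
Proof. by rewrite /interior; case: s => [|b [|c s]] //= [] ->. Qed.

Lemma path_nth_edge e v s j : path e v s -> j < size s ->
  e (last v (take j s)) (nth v s j).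
Proof.
move=> ps js; move: ps; rewrite -{1}[s](cat_take_drop j) cat_path => /andP[_].
by rewrite (drop_nth v js) /= => /andP[].
Qed.

Lemma mem_take_find (a : pred T) s y : y \in take (find a s) s -> ~~ a y.
Proof.
move=> yt; have ys := mem_take yt.
have hi : index y s < find a s by move: yt; rewrite in_take.
by have := before_find y hi; rewrite nth_index // => ->.
Qed.

End PathInterior.

Section Fans.
Variables (T : finType) (e : rel T) (W U : {set T}).

Definition fan_path r v (s : seq T) : bool :=
  [&& path e v s, size s <= r, last v s \in U, last v s != v, v \notin s,
      all (mem W) s & all (fun x => x \notin U) (interior s)].

Lemma fan_pathP r v s : fan_path r v s ->
  [/\ path e v s, size s <= r, last v s \in U, last v s != v &
     [/\ v \notin s, all (mem W) s & all (fun x => x \notin U) (interior s)]].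
Proof. by case/and5P => -> -> -> -> /and3P[-> -> ->]. Qed.

Definition fan r v (Z : {set T}) (pi : T -> seq T) : Prop :=
  (forall z, z \in Z -> fan_path r v (pi z) /\ last v (pi z) = z) /\
  (forall z1 z2 x, z1 \in Z -> z2 \in Z -> x \in pi z1 -> x \in pi z2 -> z1 = z2).

End Fans.

Definition no_large_fans r := forall (f : nat -> nat) (c : nat), exists K : nat,
  forall (T : finType) (e : rel T) (W U U0 : {set T}),
  symmetric e -> irreflexive e -> sparse_minors f e W -> U \subset W -> U0 \subset U ->
  0 < #|U0| -> #|U| <= c * #|U0| ->
  (forall v, v \in U0 -> exists Z pi, fan e W U r v Z pi /\ K <= #|Z|) -> False.

Lemma no_large_fans0 : no_large_fans 0.
Proof.
move=> f c; exists 1 => T e W U U0 _ _ _ _ _ U0n _ hfan.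
have [v vU0] : exists v, v \in U0 by apply/set0Pn; rewrite -card_gt0.
have [Z [pi [[hpath _] KZ]]] := hfan v vU0.
have [z zZ] : exists z, z \in Z by apply/set0Pn; rewrite -card_gt0.
have [/fan_pathP[_ sz _ lv _] _] := hpath z zZ.
by move: sz lv; rewrite leqn0 => /nilP ->; rewrite /= eqxx.
Qed.

Section Packing.
Variables (T : finType) (e : rel T) (W U : {set T}) (r : nat).
Hypotheses (e_sym : symmetric e) (e_irr : irreflexive e) (UW : U \subset W).

Definition link_path (p : T * T) (s : seq T) : bool :=
  [&& p.1 \in U, p.2 \in U, p.1 != p.2 &
   [&& path e p.1 s, last p.1 s == p.2, size s <= r.+1, all (mem W) s &
       all (fun x => x \notin U) (interior s)]].

Definition packing (P : {set T * T}) (pi : T * T -> seq T) : Prop :=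
  [/\ forall p, p \in P -> link_path p (pi p),
      forall p, p \in P -> (p.2, p.1) \notin P &
      forall p q x, p \in P -> q \in P ->
        x \in interior (pi p) -> x \in interior (pi q) -> p = q].

Variables (P : {set T * T}) (pi : T * T -> seq T).
Hypothesis P_packing : packing P pi.

Lemma link_pathP p : p \in P ->
  [/\ p.1 \in U, p.2 \in U, p.1 != p.2, path e p.1 (pi p) &
   [/\ last p.1 (pi p) = p.2, size (pi p) <= r.+1, all (mem W) (pi p) &
       all (fun x => x \notin U) (interior (pi p))]].
Proof.
by case: P_packing => h _ _ /h /and4P[-> -> -> /and5P[-> /eqP -> -> -> ->]].
Qed.

Lemma interior_links_inj p q x : p \in P -> q \in P ->
  x \in interior (pi p) -> x \in interior (pi q) -> p = q.
Proof. by case: P_packing => _ _; apply. Qed.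

Definition link_interior := \bigcup_(p in P) [set x in interior (pi p)].

Lemma link_interiorP x :
  reflect (exists2 p, p \in P & x \in interior (pi p)) (x \in link_interior).
Proof.
by apply: (iffP bigcupP) => -[p pP xp]; exists p; rewrite // inE in xp *.
Qed.

Lemma mem_link_interior p x : p \in P -> x \in interior (pi p) -> x \in link_interior.
Proof. by move=> pP xp; apply/link_interiorP; exists p. Qed.

Lemma link_interior_notin x : x \in link_interior -> x \notin U.
Proof. by case/link_interiorP=> p /link_pathP[_ _ _ _ [_ _ _ /allP h]] /h. Qed.

Definition link_branch a := a |: \bigcup_(p in P | p.1 == a) [set x in interior (pi p)].

Lemma link_branch_model : minor_model e r link_branch U.
Proof.
have notU p x : p \in P -> x \in interior (pi p) -> x \notin U.
  by move=> pP xp; apply/link_interior_notin/(mem_link_interior pP).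
split=> [u uU|u w uU wU uw]; first split; first exact: setU11.
  apply/subsetP => x /setU1P[->|]; first by apply: mem_ball_center; apply: setU11.
  case/bigcupP=> p /andP[pP /eqP p1]; rewrite inE => xi.
  have [_ _ _ pth [_ sz _ _]] := link_pathP pP.
  have branch_int : all (mem (link_branch u)) (interior (pi p)).
    apply/allP => y yi; rewrite /= !inE; apply/orP; right.
    by apply/bigcupP; exists p; rewrite ?pP ?p1 ?eqxx ?inE.
  have := path_ball (path_interior pth) _ branch_int; rewrite p1 => /(_ (setU11 _ _) x).
  rewrite inE xi orbT => /(_ isT); apply: ball_le.
  by rewrite size_interior; case: (size (pi p)) sz.
rewrite -setI_eq0; apply/eqP/setP => x; rewrite !inE; apply/negP.
case/andP=> /orP[/eqP->|/bigcupP[p /andP[pP /eqP pu] xp]];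
  case/orP=> [/eqP xw|/bigcupP[q /andP[qP /eqP qw] xq]].
- by rewrite xw eqxx in uw.
- by move: xq; rewrite inE => /(notU _ _ qP); rewrite uU.
- by move: xp; rewrite inE xw => /(notU _ _ pP); rewrite wU.
- move: xp xq uw; rewrite !inE -pu -qw => xp xq.
  by rewrite (interior_links_inj pP qP xp xq) eqxx.
Qed.

Lemma link_branch_sub u : u \in U -> link_branch u \subset W.
Proof.
move=> uU; apply/subsetP => x /setU1P[->|]; first exact: (subsetP UW).
case/bigcupP=> p /andP[pP _]; rewrite inE => xi.
by have [_ _ _ _ [_ _ /allP sW _]] := link_pathP pP; apply/sW/mem_interior.
Qed.

Definition sym_links := P :|: [set (p.2, p.1) | p in P].

Lemma sym_links_model_pairs : sym_links \subset model_pairs e link_branch U.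
Proof.
have link p : p \in P -> linked e (link_branch p.1) (link_branch p.2).
  move=> pP; have [_ _ p12 pth [lst _ _ _]] := link_pathP pP.
  have pi_nil : pi p != [::] by apply: contra p12 => /eqP pi0; rewrite -lst pi0.
  apply/linkedP; exists (last p.1 (interior (pi p))), p.2; split; last 2 first.
  - exact: setU11.
  - by rewrite -lst; apply: last_interior_edge.
  have := mem_last p.1 (interior (pi p)); rewrite inE => /orP[/eqP->|xi].
    exact: setU11.
  by rewrite !inE; apply/orP; right; apply/bigcupP; exists p; rewrite ?pP ?eqxx ?inE.
apply/subsetP => q; rewrite !inE => /orP[qP|/imsetP[p pP ->]] /=.
  by have [-> -> -> _ _] := link_pathP qP; rewrite link.
have [-> -> p12 _ _] := link_pathP pP; rewrite eq_sym p12 /=.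
exact: linked_sym e_sym (link _ pP).
Qed.

Lemma card_sym_links f : sparse_minors f e W -> #|sym_links| <= 2 * f r * #|U|.
Proof.
move=> hW; apply: leq_trans (subset_leq_card sym_links_model_pairs) _.
by apply: hW; [apply: link_branch_sub | apply: link_branch_model].
Qed.

Lemma card_links_sym : #|P| <= #|sym_links|.
Proof. exact/subset_leq_card/subsetUl. Qed.

Definition link_nbhd v := [set u | (v, u) \in sym_links].

Lemma sum_card_link_nbhd (A : {set T}) : \sum_(v in A) #|link_nbhd v| <= #|sym_links|.
Proof.
apply: (@leq_trans #|[set p in sym_links | p.1 \in A]|); last first.
  by apply: subset_leq_card; apply/subsetP => p; rewrite inE => /andP[].
rewrite -sum1_card (partition_big (fun p : T * T => p.1) (mem A)); last first.
  by move=> p; rewrite inE => /andP[].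
apply: leq_sum => v vA; rewrite sum1dep_card.
have pair_inj : injective (fun u : T => (v, u)) by move=> a b [].
rewrite -(card_imset (link_nbhd v) pair_inj); apply: subset_leq_card.
apply/subsetP => _ /imsetP[u un ->]; rewrite inE in un.
by rewrite inE /= eqxx andbT inE /= vA andbT.
Qed.

Lemma card_link_degree_gt (A : {set T}) D :
  #|[set v in A | D < #|link_nbhd v|]| * D.+1 <= #|sym_links|.
Proof.
apply: leq_trans (sum_card_link_nbhd [set v in A | D < #|link_nbhd v|]).
by rewrite -sum_nat_const; apply: leq_sum => v; rewrite inE => /andP[].
Qed.

Definition long_links := [set p in P | 1 < size (pi p)].
Definition link_rep (p : T * T) := head p.1 (pi p).
Definition link_reps := [set link_rep p | p in long_links].

Lemma long_link_mem p : p \in long_links -> p \in P.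
Proof. by rewrite inE => /andP[]. Qed.

Lemma link_rep_interior p : p \in long_links -> link_rep p \in interior (pi p).
Proof.
by rewrite inE /link_rep /interior => /andP[_]; case: (pi p) => [|a [|b s]] //= _; rewrite inE eqxx.
Qed.

Lemma link_rep_in_interior p : p \in long_links -> link_rep p \in link_interior.
Proof. by move=> pL; apply: mem_link_interior (long_link_mem pL) (link_rep_interior pL). Qed.

Lemma long_link_of_interior p x : p \in P -> x \in interior (pi p) -> p \in long_links.
Proof.
move=> pP xi; rewrite inE pP /=.
have : 0 < size (interior (pi p)) by case: (interior (pi p)) xi.
by rewrite size_interior; case: (size (pi p)) => [|[|]].
Qed.

Lemma link_rep_in_W p : p \in long_links -> link_rep p \in W.
Proof.
move=> pL; have [_ _ _ _ [_ _ /allP sW _]] := link_pathP (long_link_mem pL).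
exact/sW/mem_interior/link_rep_interior.
Qed.

(* The interior of each long link is contracted onto its first vertex. *)
Definition link_bag x :=
  if [pick p in long_links | link_rep p == x] is Some p
  then [set y in interior (pi p)] else [set x].

Lemma link_bag_rep p : p \in long_links -> link_bag (link_rep p) = [set y in interior (pi p)].
Proof.
move=> pL; rewrite /link_bag; case: pickP => [q /andP[qL /eqP rq]|/(_ p)]; last first.
  by rewrite pL eqxx.
suff -> : q = p by [].
apply: (interior_links_inj (long_link_mem qL) (long_link_mem pL) _ (link_rep_interior pL)).
by rewrite -rq link_rep_interior.
Qed.

Lemma link_bag_out x : x \notin link_interior -> link_bag x = [set x].
Proof.
rewrite /link_bag; case: pickP => [q /andP[qL /eqP <-]|//].
by rewrite link_rep_in_interior.
Qed.

Definition contr_dom := [set x in W | (x \notin link_interior) || (x \in link_reps)].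
Definition contr_targets := U :|: link_reps.
Definition contr_adj := contract_rel e link_bag.

Lemma contr_domP x : x \in contr_dom ->
  x \in W /\ (x \notin link_interior \/ exists2 p, p \in long_links & x = link_rep p).
Proof.
rewrite inE => /andP[xW /orP[xI|/imsetP[p pL xp]]]; first by split=> //; left.
by split=> //; right; exists p.
Qed.

Lemma link_bag_model x : x \in contr_dom ->
  [/\ x \in link_bag x, link_bag x \subset ball e (link_bag x) x r & link_bag x \subset W].
Proof.
case/contr_domP=> xW [xI|[p pL ->]].
  rewrite link_bag_out //; split; rewrite ?set11 //; apply/subsetP => y; rewrite inE => /eqP->.
    by apply: mem_ball_center; apply: set11.
  by [].
have [_ _ _ pth [_ sz sW _]] := link_pathP (long_link_mem pL).
rewrite link_bag_rep //; split; first by rewrite inE link_rep_interior.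
  have szi : size (interior (pi p)) <= r by rewrite size_interior; case: (size (pi p)) sz.
  move: (path_interior pth) szi (link_rep_interior pL).
  case E : (interior (pi p)) => [//|a t] /= /andP[_ pt] szi _.
  rewrite [link_rep p](interior_head _ E).
  apply/subsetP => y; rewrite inE => yi; apply: ball_le (ltnW szi) _.
  apply: (path_ball pt) yi; first by rewrite inE mem_head.
  by apply/allP => z zt; rewrite /= inE inE zt orbT.
by apply/subsetP => y; rewrite inE => /mem_interior; apply/allP.
Qed.

Lemma link_bag_disj x y : x \in contr_dom -> y \in contr_dom -> x != y ->
  [disjoint link_bag x & link_bag y].
Proof.
case/contr_domP=> _ hx /contr_domP[_ hy] xy; rewrite -setI_eq0; apply/eqP/setP => z.
rewrite !inE; apply/negP => /andP[].
case: hx => [xI|[p pL xp]]; case: hy => [yI|[q qL yq]].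
- by rewrite (link_bag_out xI) (link_bag_out yI) !inE => /eqP-> /eqP yx; rewrite yx eqxx in xy.
- rewrite (link_bag_out xI) yq (link_bag_rep qL) !inE => /eqP-> zi.
  by rewrite (mem_link_interior (long_link_mem qL) zi) in xI.
- rewrite (link_bag_out yI) xp (link_bag_rep pL) !inE => zi /eqP zy.
  by rewrite -zy (mem_link_interior (long_link_mem pL) zi) in yI.
- rewrite xp yq (link_bag_rep pL) (link_bag_rep qL) !inE => zp zq.
  by move: xy; rewrite xp yq (interior_links_inj (long_link_mem pL) (long_link_mem qL) zp zq) eqxx.
Qed.

Lemma sparse_minors_contr f : sparse_minors f e W ->
  sparse_minors (fun t => f (t * (2 * r + 1) + r)) contr_adj contr_dom.
Proof. exact: (sparse_minors_contract e_sym link_bag_model link_bag_disj). Qed.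

Lemma contr_targets_sub : contr_targets \subset contr_dom.
Proof.
apply/subsetP => x; rewrite !inE => /orP[xU|xR].
  by rewrite (subsetP UW) //=; apply/orP; left; apply: contraL xU => /link_interior_notin.
by rewrite xR orbT andbT; case/imsetP: xR => p pL ->; apply: link_rep_in_W.
Qed.

Lemma card_contr_targets : #|contr_targets| <= #|U| + #|P|.
Proof.
apply: leq_trans (leq_card_setU _ _) _; rewrite leq_add2l.
apply: leq_trans (leq_imset_card _ _) _; apply: subset_leq_card.
by apply/subsetP => p; apply: long_link_mem.
Qed.

Lemma packing_setU1 p s : link_path p s -> p \notin P -> (p.2, p.1) \notin P ->
  {in interior s, forall x, x \notin link_interior} ->
  packing (p |: P) (fun q => if q == p then s else pi q).
Proof.
case: P_packing => hpath hswap _ ps pP swP s_new.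
have neq q : q \in P -> (q == p) = false by move=> qP; apply: contraNF pP => /eqP <-.
split=> [q /setU1P[->|qP]|q /setU1P[->|qP]|q1 q2 x /setU1P[->|q1P] /setU1P[->|q2P]].
- by rewrite eqxx.
- by rewrite neq //; apply: hpath.
- rewrite !inE negb_or swP andbT; case: p ps {pP swP s_new neq} => a b /=.
  by case/and4P=> _ _ ab _; apply: contra ab => /eqP[->].
- rewrite !inE negb_or hswap // andbT; apply: contraNneq swP => <-.
  by case: q qP {neq}.
- by [].
- rewrite eqxx neq // => /s_new xI xq.
  by rewrite (mem_link_interior q2P xq) in xI.
- rewrite eqxx neq // => xq /s_new xI.
  by rewrite (mem_link_interior q1P xq) in xI.
- by rewrite !neq //; apply: interior_links_inj.
Qed.

Lemma contr_adj_out x y : x \notin link_interior -> y \notin link_interior ->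
  e x y -> contr_adj x y.
Proof.
move=> xI yI xy; rewrite /contr_adj /contract_rel (link_bag_out xI) (link_bag_out yI).
rewrite (_ : x != y); last by apply: contraTneq xy => ->; rewrite e_irr.
by apply/linkedP; exists x, y; rewrite !inE !eqxx.
Qed.

Lemma contr_adj_rep x p y : x \notin link_interior -> p \in long_links ->
  y \in interior (pi p) -> e x y -> contr_adj x (link_rep p).
Proof.
move=> xI pL yp xy; rewrite /contr_adj /contract_rel (link_bag_out xI) (link_bag_rep pL).
rewrite (_ : x != _); last by apply: contraNneq xI => ->; apply: link_rep_in_interior.
by apply/linkedP; exists x, y; rewrite !inE eqxx.
Qed.

Hypothesis P_max : forall P' pi', packing P' pi' -> #|P'| <= #|P|.

Lemma fan_path_meets_links v s : v \in U -> fan_path e W U r.+1 v s ->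
  last v s \notin link_nbhd v -> has (mem link_interior) s.
Proof.
move=> vU /fan_pathP[pth sz zU zv [vs sW sU]] z_nbhd; apply/negPn/negP => s_new.
set z := last v s in zU zv z_nbhd.
have vzP : (v, z) \notin P by apply: contra z_nbhd => vz; rewrite !inE vz.
have zvP : (z, v) \notin P.
  by apply: contra z_nbhd => zv'; rewrite !inE; apply/orP; right; apply/imsetP; exists (z, v).
have vz_path : link_path (v, z) s by rewrite /link_path /= vU zU eq_sym zv pth eqxx sz sW sU.
have s_int : {in interior s, forall x, x \notin link_interior}.
  by move=> x /mem_interior xs; apply: contra s_new => xI; apply/hasP; exists x.
have := P_max (packing_setU1 vz_path vzP zvP s_int).
by rewrite cardsU1 vzP ltnn.
Qed.

Section FanContraction.
Variables (v : T) (Z : {set T}) (pi0 : T -> seq T).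
Hypothesis vU : v \in U.
Hypothesis Z_paths : forall z, z \in Z -> fan_path e W U r.+1 v (pi0 z) /\ last v (pi0 z) = z.
Hypothesis Z_disj : forall z1 z2 x, z1 \in Z -> z2 \in Z -> x \in pi0 z1 -> x \in pi0 z2 -> z1 = z2.

(* By maximality of the packing, a fan path that does not end at a packing
   neighbour of [v] meets a long link; it is cut at the first such vertex and
   rerouted to the vertex onto which that link is contracted. *)
Definition hitting := [set z in Z | has (mem link_interior) (pi0 z)].
Definition hit_index z := find (mem link_interior) (pi0 z).
Definition first_hit z := nth v (pi0 z) (hit_index z).

Lemma fan_cover : Z \subset [set z in Z | z \in link_nbhd v] :|: hitting.
Proof.
apply/subsetP => z zZ; have [fp lz] := Z_paths zZ; apply/setUP.
case: (boolP (z \in link_nbhd v)) => zN; first by left; rewrite inE zZ.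
by right; rewrite inE zZ (fan_path_meets_links vU fp) // lz.
Qed.

Lemma hitting_sub : hitting \subset Z.
Proof. by apply/subsetP => z; rewrite inE => /andP[]. Qed.

Lemma first_hit_interior z : z \in hitting -> first_hit z \in link_interior.
Proof. by rewrite inE => /andP[_]; apply: nth_find. Qed.

Lemma hit_index_lt z : z \in hitting -> hit_index z < (size (pi0 z)).-1.
Proof.
move=> zH; have := zH; rewrite inE => /andP[zZ]; rewrite has_find => hsz.
have [/fan_pathP[_ _ zU _ _] lz] := Z_paths zZ.
rewrite ltn_neqAle -ltnS prednK ?hsz ?andbT; last exact: leq_ltn_trans hsz.
apply: contraL (first_hit_interior zH) => /eqP hlast.
rewrite /first_hit hlast nth_last lz; apply: contraL zU; rewrite lz.
exact: link_interior_notin.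
Qed.

Lemma hit_index_size z : z \in hitting -> hit_index z < size (pi0 z).
Proof. by move=> /hit_index_lt/leq_trans; apply; apply: leq_pred. Qed.

Lemma before_first_hit z y : z \in hitting -> y \in take (hit_index z) (pi0 z) ->
  [/\ y \notin link_interior, y \notin U & y \in W].
Proof.
move=> zH yt; have [/fan_pathP[_ _ _ _ [_ sW sU]] _] := Z_paths (subsetP hitting_sub z zH).
split; first exact: mem_take_find yt.
  apply: (allP sU); move: yt; rewrite -(take_takel _ (ltnW (hit_index_lt zH))).
  exact: mem_take.
exact: (allP sW) _ (mem_take yt).
Qed.

Definition hit_rep z :=
  if [pick p in long_links | first_hit z \in interior (pi p)] is Some p then link_rep p else v.

Lemma hit_repP z : z \in hitting ->
  exists2 p, p \in long_links & hit_rep z = link_rep p /\ first_hit z \in interior (pi p).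
Proof.
move=> zH; rewrite /hit_rep; case: pickP => [p /andP[pL hp]|none]; first by exists p.
have /link_interiorP[p pP hp] := first_hit_interior zH.
by have := none p; rewrite hp (long_link_of_interior pP hp).
Qed.

Definition new_ends := [set hit_rep z | z in hitting].
Definition end_source z' := odflt v [pick z in hitting | hit_rep z == z'].

Lemma end_sourceP z' : z' \in new_ends ->
  end_source z' \in hitting /\ hit_rep (end_source z') = z'.
Proof.
case/imsetP=> z zH ->; rewrite /end_source; case: pickP => [y /andP[yH /eqP ->]|none] //=.
by have := none z; rewrite zH eqxx.
Qed.

Definition shortcut z' :=
  rcons (take (hit_index (end_source z')) (pi0 (end_source z'))) z'.

Lemma card_fan_contract : #|Z| <= #|link_nbhd v| + r * #|new_ends|.
Proof.
apply: leq_trans (subset_leq_card fan_cover) _.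
apply: leq_trans (leq_card_setU _ _) _; apply: leq_add.
  by apply: subset_leq_card; apply/subsetP => z; rewrite !inE => /andP[].
have hit_inj : {in hitting &, injective first_hit}.
  move=> z1 z2 z1H z2H h; have mem_hit z : z \in hitting -> first_hit z \in pi0 z.
    by move=> zH; apply/mem_nth/hit_index_size.
  apply: (Z_disj (x := first_hit z1)); rewrite ?(subsetP hitting_sub) // ?mem_hit //.
  by rewrite h mem_hit.
rewrite -(card_in_imset hit_inj).
have sub : first_hit @: hitting \subset \bigcup_(z' in new_ends) link_bag z'.
  apply/subsetP => _ /imsetP[z zH ->]; apply/bigcupP; exists (hit_rep z); first exact: imset_f.
  by have [p pL [-> hp]] := hit_repP zH; rewrite link_bag_rep // inE.
apply: leq_trans (subset_leq_card sub) _; apply: leq_trans (card_bigcup_le _ _) _.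
rewrite mulnC -sum_nat_const; apply: leq_sum => _ /imsetP[z zH ->].
have [p pL [-> _]] := hit_repP zH; rewrite link_bag_rep // cardsE.
apply: leq_trans (card_size _) _; rewrite size_interior.
by have [_ _ _ _ [_ sz _ _]] := link_pathP (long_link_mem pL); case: (size (pi p)) sz.
Qed.

Lemma shortcut_fan_path z' : z' \in new_ends ->
  fan_path contr_adj contr_dom contr_targets r v (shortcut z') /\ last v (shortcut z') = z'.
Proof.
case/end_sourceP; rewrite /shortcut; set z := end_source z' => zH hz.
have [/fan_pathP[pth sz _ _ [vs _ _]] _] := Z_paths (subsetP hitting_sub z zH).
have [p pL [hp hitp]] := hit_repP zH; rewrite hp in hz; subst z'.
set pre := take (hit_index z) (pi0 z).
have pre_out y : y \in v :: pre -> y \notin link_interior.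
  rewrite inE => /orP[/eqP->|/(before_first_hit zH)[] //].
  by apply: contraL vU; apply: link_interior_notin.
have rep_ne_v : link_rep p != v.
  by apply: contraTneq (link_rep_in_interior pL) => ->; apply: pre_out; rewrite mem_head.
have rep_in_reps : link_rep p \in link_reps by apply: imset_f.
split; last exact: last_rcons.
rewrite /fan_path last_rcons rep_ne_v !inE rep_in_reps orbT /= interior_rcons.
apply/and5P; split.
- rewrite rcons_path; apply/andP; split.
    apply: (@sub_in_path _ (fun x => x \notin link_interior) e); last exact: take_path.
      by move=> x y xI yI; apply: contr_adj_out.
    by apply/allP => y; apply: pre_out.
  apply: (contr_adj_rep (pre_out _ (mem_last _ _)) pL hitp).
  exact: path_nth_edge pth (hit_index_size zH).
- rewrite size_rcons size_take hit_index_size //.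
  by apply: leq_trans (hit_index_lt zH) _; rewrite -subn1 leq_subLR add1n.
- by rewrite mem_rcons inE negb_or eq_sym rep_ne_v; apply: contra vs => /mem_take.
- rewrite all_rcons /= inE (link_rep_in_W pL) rep_in_reps orbT /=.
  by apply/allP => y /(before_first_hit zH)[yI _ yW] /=; rewrite inE yW yI.
- apply/allP => y /(before_first_hit zH)[yI yU _]; rewrite !inE negb_or yU /=.
  by apply: contra yI => /imsetP[q qL ->]; apply: link_rep_in_interior.
Qed.

Lemma shortcut_disj z1' z2' x : z1' \in new_ends -> z2' \in new_ends ->
  x \in shortcut z1' -> x \in shortcut z2' -> z1' = z2'.
Proof.
move=> z1N z2N; have [z1H ne1] := end_sourceP z1N; have [z2H ne2] := end_sourceP z2N.
have new_int z' : z' \in new_ends -> z' \in link_interior.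
  by case/imsetP=> z zH ->; have [p pL [-> _]] := hit_repP zH; apply: link_rep_in_interior.
rewrite /shortcut !mem_rcons !inE => /orP[/eqP x1|x1] /orP[/eqP x2|x2].
- by rewrite -x1 -x2.
- by have [] := before_first_hit z2H x2; rewrite x1 new_int.
- by have [] := before_first_hit z1H x1; rewrite x2 new_int.
- rewrite -ne1 -ne2; congr hit_rep.
  by apply: Z_disj (mem_take x1) (mem_take x2); apply: (subsetP hitting_sub).
Qed.

Lemma fan_contract : fan contr_adj contr_dom contr_targets r v new_ends shortcut.
Proof. by split; [apply: shortcut_fan_path | apply: shortcut_disj]. Qed.

End FanContraction.
End Packing.

Lemma no_large_fansS r : no_large_fans r -> no_large_fans r.+1.
Proof.
move=> IH f c; set d := f r; set D := 4 * c * d.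
have [K' hK'] := IH (fun t => f (t * (2 * r + 1) + r)) (2 * c * (1 + 2 * d)).
exists (D + r * K' + 1) => T e W U U0 e_sym e_irr hW UW U0U U0_gt0 U_le hfan.
have [[P pi] /= [P_pack P_max]] : exists a : {set T * T} * (T * T -> seq T),
    packing e W U r a.1 a.2 /\ forall b, packing e W U r b.1 b.2 -> #|b.1| <= #|a.1|.
  apply: (@exists_max _ _ _ #|{: T * T}|); last by move=> a _; apply: max_card.
  by exists (set0, fun _ => [::]); split=> // p; rewrite inE.
have P_max' P' pi' : packing e W U r P' pi' -> #|P'| <= #|P| by move/(P_max (P', pi')).
have card_sym := card_sym_links e_sym UW P_pack hW; rewrite -/d in card_sym.
(* The packing has at most [2 d c |U0|] ordered pairs, so at most half of [U0]
   has more than [D] packing neighbours. *)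
set Bad := [set v in U0 | D < #|link_nbhd P v|].
have Bad_le : 2 * #|Bad| <= #|U0|.
  have := leq_trans card_sym (leq_mul (leqnn _) U_le).
  by move/(leq_trans (card_link_degree_gt P U0 D)); rewrite -/Bad /D; clear; nia.
have U0_le : #|U0| <= 2 * #|U0 :\: Bad|.
  have BU0 : Bad \subset U0 by apply/subsetP => v; rewrite inE => /andP[].
  have : #|U0 :\: Bad| + #|Bad| = #|U0|.
    by rewrite cardsD (setIidPr BU0) subnK // subset_leq_card.
  by move: Bad_le; clear; lia.
apply: (hK' T (contr_adj e P pi) (contr_dom W P pi) (contr_targets U P pi) (U0 :\: Bad)).
- exact: (contract_rel_sym _ e_sym).
- exact: contract_rel_irr.
- exact: (sparse_minors_contr e_sym P_pack hW).
- exact: (contr_targets_sub UW P_pack).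
- by apply/subsetP => v; rewrite !inE => /andP[_ /(subsetP U0U) ->].
- by move: U0_le U0_gt0; clear; lia.
- have := leq_trans (card_links_sym P) card_sym; have := card_contr_targets U P pi.
  by move: U_le U0_le; clear; nia.
move=> v; rewrite !inE => /andP[vgood vU0]; rewrite vU0 /= -leqNgt in vgood.
have [Z [pi0 [[Z_paths Z_disj] KZ]]] := hfan v vU0.
have vU := subsetP U0U v vU0.
exists (new_ends P pi v Z pi0), (shortcut P pi v Z pi0); split.
  exact: (fan_contract e_irr P_pack vU Z_paths Z_disj).
have := card_fan_contract P_pack P_max' vU Z_paths Z_disj.
by move: KZ vgood; clear; nia.
Qed.

Lemma all_no_large_fans r : no_large_fans r.
Proof. by elim: r => [|r]; [apply: no_large_fans0 | apply: no_large_fansS]. Qed.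

Section FanAugmentation.
Variables (T : finType) (e : rel T) (U : {set T}) (r : nat) (v : T).
Variables (Z : {set T}) (pi : T -> seq T).
Hypothesis Z_fan : fan e setT U r v Z pi.

Definition fan_vertices := \bigcup_(z in Z) [set x in pi z].

Lemma fan_vertex z x : z \in Z -> x \in pi z -> x \in fan_vertices.
Proof. by move=> zZ xz; apply/bigcupP; exists z; rewrite ?inE. Qed.

Lemma end_in_fan_vertices z : z \in Z -> z \in fan_vertices.
Proof.
case: Z_fan => Z_paths _ zZ; have [/fan_pathP[_ _ _ lv _] lz] := Z_paths z zZ.
apply: (fan_vertex zZ); move: (mem_last v (pi z)) lv; rewrite lz inE.
by case/orP=> [/eqP->|]; rewrite ?eqxx.
Qed.

Lemma center_notin_fan_vertices : v \notin fan_vertices.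
Proof.
case: Z_fan => Z_paths _; apply/bigcupP => -[z zZ]; rewrite inE.
by have [/fan_pathP[_ _ _ _ [/negP]]] := Z_paths z zZ.
Qed.

Lemma card_fan_vertices : #|fan_vertices| <= r * #|Z|.
Proof.
case: Z_fan => Z_paths _; apply: leq_trans (card_bigcup_le _ _) _.
rewrite mulnC -sum_nat_const; apply: leq_sum => z zZ; rewrite cardsE.
by apply: leq_trans (card_size _) _; have [/fan_pathP[]] := Z_paths z zZ.
Qed.

Lemma fan_augment s : path e v s -> size s <= r -> v \notin s ->
  all (mem (~: fan_vertices)) s -> has (mem U) s ->
  exists Z' pi', fan e setT U r v Z' pi' /\ #|Z| < #|Z'|.
Proof.
case: Z_fan => Z_paths Z_disj pth sz vs s_new hasU.
set j := find (mem U) s; set z0 := nth v s j; set s' := rcons (take j s) z0.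
have js : j < size s by rewrite -has_find.
have s's x : x \in s' -> x \in s.
  by rewrite mem_rcons inE => /orP[/eqP->|/mem_take //]; apply: mem_nth.
have s'_new x : x \in s' -> x \notin fan_vertices.
  by move=> /s's xs; have := allP s_new x xs; rewrite /= inE.
have z0Z : z0 \notin Z.
  have := s'_new z0; rewrite mem_rcons mem_head => /(_ isT).
  by apply: contra => /end_in_fan_vertices.
have neq z : z \in Z -> (z == z0) = false by move=> zZ; apply: contraNF z0Z => /eqP <-.
exists (z0 |: Z), (fun z => if z == z0 then s' else pi z); split; last first.
  by rewrite cardsU1 z0Z.
split=> [z /setU1P[->|zZ]|z1 z2 x /setU1P[->|z1Z] /setU1P[->|z2Z]]; rewrite ?eqxx ?neq //.
- have z0v : z0 != v by apply: contraNneq vs => <-; apply: mem_nth.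
  have z0U : z0 \in U := nth_find v hasU.
  rewrite /fan_path /s' last_rcons z0v z0U /= interior_rcons.
  rewrite rcons_path take_path // path_nth_edge // size_rcons size_take js.
  rewrite (leq_trans js sz) mem_rcons inE negb_or eq_sym z0v /=.
  split=> //; apply/and3P; split; last by apply/allP => x; apply: mem_take_find.
    by apply: contra vs => /mem_take.
  by apply/allP => x; rewrite inE.
- exact: Z_paths.
- by move=> xs' xp; have := s'_new x xs'; rewrite (fan_vertex z2Z xp).
- by move=> xp xs'; have := s'_new x xs'; rewrite (fan_vertex z1Z xp).
- exact: Z_disj.
Qed.

End FanAugmentation.

Lemma fan_of_no_separator (T : finType) (e : rel T) (U : {set T}) r K v : v \in U ->
  (forall S : {set T}, v \notin S -> #|S| <= r * K ->
     exists u, [/\ u \in ball e (~: S) v r, u != v & u \in U]) ->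
  exists Z pi, fan e setT U r v Z pi /\ K <= #|Z|.
Proof.
move=> vU hsep.
have [[Z pi] /= [Z_fan Z_max]] : exists a : {set T} * (T -> seq T),
    fan e setT U r v a.1 a.2 /\ forall b, fan e setT U r v b.1 b.2 -> #|b.1| <= #|a.1|.
  apply: (@exists_max _ _ _ #|T|); last by move=> a _; apply: max_card.
  by exists (set0, fun _ => [::]); split=> [z|z1 z2 x]; rewrite inE.
exists Z, pi; split=> //; rewrite leqNgt; apply/negP => ZK.
have card_S : #|fan_vertices Z pi| <= r * K.
  by apply: leq_trans (card_fan_vertices Z_fan) _; rewrite leq_mul2l ltnW ?orbT.
have [u [ub uv uU]] := hsep _ (center_notin_fan_vertices Z_fan) card_S.
have [s [pth lst sz s_new vs]] := ball_path ub uv.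
have hasU : has (mem U) s.
  apply/hasP; exists u => //; move: (mem_last v s) uv; rewrite lst inE.
  by case/orP=> [/eqP->|]; rewrite ?eqxx.
have [Z' [pi' [Z'_fan ltZ]]] := fan_augment Z_fan pth sz vs s_new hasU.
by have := Z_max (Z', pi') Z'_fan; rewrite leqNgt ltZ.
Qed.

Lemma finite_rank_of_progress G r m :
  (forall i, ranked G r m i != setT ->
     exists v, v \notin ranked G r m i /\ v \in ranked G r m i.+1) ->
  forall v, finite_rank G r m v.
Proof.
move=> grow v; exists (gn G).+1.
suff [->|] : ranked G r m (gn G).+1 = setT \/ (gn G).+1 <= #|ranked G r m (gn G).+1|.
  by rewrite inE.
  by move=> big; have := leq_trans big (max_card _); rewrite card_ord ltnn.
have next_setT i : ranked G r m i = setT -> ranked G r m i.+1 = setT.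
  by move=> full; apply/eqP; rewrite eqEsubset subsetT -full ranked_mono.
elim: (gn G).+1 => [|i [full|IH]]; [by right | by left; apply: next_setT |].
have [full|/grow[u [u_new u_next]]] := eqVneq (ranked G r m i) setT.
  by left; apply: next_setT.
right; apply: leq_trans (subset_leq_card (_ : u |: ranked G r m i \subset _)).
  by rewrite cardsU1 u_new add1n ltnS.
by apply/subsetP => x /setU1P[->//|]; apply/subsetP/ranked_mono.
Qed.

Lemma bounded_expansion_finite_rank (C : graph -> Prop) : bounded_expansion C ->
  forall r, exists m, forall G, C G -> forall v : gV G, finite_rank G r m v.
Proof.
case=> f hf r; have [K hK] := all_no_large_fans r f 1.
exists (r * K) => G CG; apply: finite_rank_of_progress => i not_full.
apply: NNPP => stuck; set U := ~: ranked G r (r * K) i.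
apply: (hK _ _ _ U U (@gsym G) (@girr G) (sparse_minors_graph (hf G CG)) (subsetT _) (subxx _)).
- rewrite card_gt0; apply: contra not_full => /eqP U0.
  by rewrite -[ranked _ _ _ _]setCK -/U U0 setC0.
- by rewrite mul1n.
move=> v vU; apply: (fan_of_no_separator vU) => S vS cS.
apply: NNPP => no_escape; apply: stuck; exists v; split; first by rewrite inE in vU.
rewrite /= !inE; apply/orP; right; apply/existsP; exists S.
rewrite vS cS /=; apply/subsetP => u; rewrite !inE => /andP[uv ub].
by apply: contraT => u_new; case: no_escape; exists u; rewrite inE.
Qed.

Theorem theorem1p4 (C : graph -> Prop) :
  bounded_expansion C <->
  (forall r : nat, exists m : nat,
     forall G : graph, C G -> forall v : gV G, finite_rank G r m v).
Proof.
split; [exact: bounded_expansion_finite_rank | exact: finite_rank_bounded_expansion].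
Qed.
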